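(* Consider an instance of the periodic lock scheduling problem with exactly two streams, one downstream with offset $\mu_D$ and periodicity $\lambda_D\ge2$, and one upstream with offset $\mu_U$ and periodicity $\lambda_U\ge2$. Let $\Lambda=\operatorname{lcm}(\lambda_D,\lambda_U)$. Then for any optimal schedule $\sigma$, $$C_{\mathrm{avg},\sigma}\ge\begin{cases}\frac1\Lambda & \text{if } \mu_U-\mu_D\equiv0\pmod{\gcd(\lambda_D,\lambda_U)},\\ 0&\text{otherwise.}\end{cases}$$
   Context: Periodic lock scheduling problem. Time is discrete, periods $t=1,2,\dots$. Each stream $i$ has a direction $\delta_i\in\{D,U\}$, an integer periodicity $\lambda_i\ge1$ and an integer offset $1\le\mu_i\le\lambda_i$; $a_i(t)=1$ if $t\equiv\mu_i\pmod{\lambda_i}$ and $0$ otherwise, $a_\delta(t)=\sum_{i:\delta_i=\delta}a_i(t)$. A schedule is a sequence $\sigma=(\sigma(t))_{t\ge1}$ with $\sigma(t)\in\{D,U,W\}$ ($D$: process downstream waiting vessels and switch alignment from downstream to upstream; $U$ symmetrically; $W$: wait); the initial orientation is arbitrary; it is feasible if the non-$W$ actions alternate between $D$ and $U$. Queue lengths: $n_D(0)=n_U(0)=0$ and for $t\ge1$, $n_\delta(t)=0$ if $\sigma(t)=\delta$ and $n_\delta(t)=n_\delta(t-1)+a_\delta(t)$ otherwise. $C_\sigma(t)=n_D(t)+n_U(t)$ and $C_{\mathrm{avg},\sigma}=\lim_{T\to\infty}\frac1T\sum_{t=1}^TC_\sigma(t)$. A schedule is optimal if it is feasible and minimizes $C_{\mathrm{avg},\sigma}$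 over all feasible schedules. *)

From Stdlib Require Import Reals Lia Arith List.
Open Scope R_scope.

Inductive dir := D | U.
Inductive action := ActD | ActU | ActW.

Record stream := mkStream { sdir : dir; slam : nat; smu : nat }.

Definition valid_stream (s : stream) : Prop :=
  (1 <= slam s)%nat /\ (1 <= smu s <= slam s)%nat.

Definition arr (s : stream) (t : nat) : nat :=
  if Nat.eqb (t mod slam s) (smu s mod slam s) then 1%nat else 0%nat.

Definition dir_eqb (d1 d2 : dir) : bool :=
  match d1, d2 with D, D | U, U => true | _, _ => false end.

Definition arr_dir (L : list stream) (d : dir) (t : nat) : nat :=
  fold_right (fun s acc => ((if dir_eqb (sdir s) d then arr s t else 0) + acc)%nat) 0%nat L.

(* schedules are sigma : nat -> action, only sigma t for t >= 1 matters *)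
Definition schedule := nat -> action.

Definition act_of_dir (d : dir) : action := match d with D => ActD | U => ActU end.

Definition feasible (sigma : schedule) : Prop :=
  forall t1 t2 : nat, (1 <= t1 < t2)%nat ->
    sigma t1 <> ActW -> sigma t2 <> ActW ->
    (forall t, (t1 < t < t2)%nat -> sigma t = ActW) ->
    sigma t1 <> sigma t2.

Fixpoint queue (L : list stream) (sigma : schedule) (d : dir) (t : nat) : nat :=
  match t with
  | O => O
  | S t' => if (match sigma t, d with ActD, D | ActU, U => true | _, _ => false end)
             then O else (queue L sigma d t' + arr_dir L d t)%nat
  end.

Definition cost (L : list stream) (sigma : schedule) (t : nat) : nat :=
  (queue L sigma D t + queue L sigma U t)%nat.

Fixpoint cum_cost (L : list stream) (sigma : schedule) (T : nat) : nat :=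
  match T with O => O | S T' => (cum_cost L sigma T' + cost L sigma T)%nat end.

Definition avg_cost (L : list stream) (sigma : schedule) (T : nat) : R :=
  INR (cum_cost L sigma T) / INR T.

Definition has_avg_cost (L : list stream) (sigma : schedule) (c : R) : Prop :=
  Un_cv (avg_cost L sigma) c.

Definition optimal (L : list stream) (sigma : schedule) (c : R) : Prop :=
  feasible sigma /\ has_avg_cost L sigma c /\
  forall sigma' c', feasible sigma' -> has_avg_cost L sigma' c' -> c <= c'.

From Stdlib Require Import Reals Lia Lra Arith List.
Open Scope R_scope.

(* When mu_U = mu_D (mod gcd), the Chinese remainder theorem gives a period t0
   at which both streams have an arrival, and then so do all the periods
   t0 + k Lambda.  One action empties at most one of the two queues, so the cost
   is at least 1 at each of these periods; the cumulative cost up to T is thus at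
   least (T - t0) / Lambda and the average cost tends to at least 1 / Lambda.
   Otherwise the bound is just nonnegativity of the cost. *)

Lemma Un_cv_const (x : R) : Un_cv (fun _ => x) x.
Proof.
  intros eps Heps; exists 0%nat; intros n _.
  unfold Rdist; rewrite Rminus_diag, Rabs_R0; lra.
Qed.

Lemma Un_cv_inv_INR_S : Un_cv (fun n => / INR (S n)) 0.
Proof.
  apply cv_infty_cv_0; intro M.
  destruct (INR_unbounded M) as [N HN]; exists N; intros n Hn.
  apply Rlt_le_trans with (INR N); [lra|].
  apply le_INR; lia.
Qed.

Lemma Un_cv_ge_of_ge_sub_div (u : nat -> R) (l B K : R) :
  Un_cv u l -> (forall n, (1 <= n)%nat -> B - K / INR n <= u n) -> B <= l.
Proof.
  intros Hu Hb.
  assert (Hlow : Un_cv (fun n => B - K * / INR (S n)) (B - K * 0)).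
  { apply CV_minus; [apply Un_cv_const|].
    apply CV_mult; [apply Un_cv_const | apply Un_cv_inv_INR_S]. }
  rewrite Rmult_0_r, Rminus_0_r in Hlow.
  refine (@Rle_cv_lim _ (fun n => u (n + 1)%nat) _ _ _ Hlow (CV_shift' u 1 l Hu)).
  intro n; rewrite Nat.add_1_r; apply Hb; lia.
Qed.

Lemma mod_add_mul_multiple (a t k P : nat) :
  Nat.divide a P -> ((t + k * P) mod a = t mod a)%nat.
Proof. intros [q ->]; rewrite Nat.mul_assoc; apply Nat.Div0.mod_add. Qed.

Lemma exists_common_residue (a b x y : nat) :
  (0 < a)%nat -> (0 < b)%nat ->
  (x mod Nat.gcd a b = y mod Nat.gcd a b)%nat ->
  exists t, (x <= t /\ t mod a = x mod a /\ t mod b = y mod b)%nat.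
Proof.
  intros Ha Hb Hxy.
  set (g := Nat.gcd a b) in *.
  assert (Hg : g <> 0%nat) by (unfold g; rewrite Nat.gcd_eq_0; lia).
  destruct (Nat.gcd_bezout_pos a b Ha) as [u [v Huv]]; fold g in Huv.
  destruct (Nat.gcd_divide_r a b) as [b' Hb']; fold g in Hb'.
  pose proof (Nat.div_mod x g Hg) as Ex.
  pose proof (Nat.div_mod y g Hg) as Ey.
  rewrite <- Hxy in Ey.
  set (qx := (x / g)%nat) in *; set (qy := (y / g)%nat) in *; set (r := (x mod g)%nat) in *.
  destruct b' as [|b'']; [lia|].
  (* With x = qx g + r, y = qy g + r and b = (b'' + 1) g, the shift m u a moves x onto y + (m v + qx) b. *)
  set (m := (qy + qx * b'')%nat).
  exists (x + m * u * a)%nat; split; [lia|split].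
  - rewrite <- Nat.mul_assoc; apply mod_add_mul_multiple, Nat.divide_factor_r.
  - replace (x + m * u * a)%nat with (y + (m * v + qx) * b)%nat.
    + apply mod_add_mul_multiple, Nat.divide_refl.
    + rewrite <- Nat.mul_assoc, Huv, Hb', Ex, Ey; unfold m; ring.
Qed.

Lemma cost_pos_of_arrivals (L : list stream) (sigma : schedule) (t : nat) :
  (1 <= t)%nat -> (0 < arr_dir L D t)%nat -> (0 < arr_dir L U t)%nat ->
  (1 <= cost L sigma t)%nat.
Proof.
  destruct t as [|t]; [lia|]; intros _ HD HU.
  unfold cost; simpl queue; destruct (sigma (S t)); lia.
Qed.

Lemma arr_dir_two_streams (lamD muD lamU muU : nat) (t : nat) :
  arr_dir (mkStream D lamD muD :: mkStream U lamU muU :: nil) D t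
    = arr (mkStream D lamD muD) t /\
  arr_dir (mkStream D lamD muD :: mkStream U lamU muU :: nil) U t
    = arr (mkStream U lamU muU) t.
Proof. unfold arr_dir; simpl; lia. Qed.

Lemma arr_on_offset (s : stream) (t : nat) :
  (t mod slam s = smu s mod slam s)%nat -> arr s t = 1%nat.
Proof. intro H; unfold arr; rewrite H, Nat.eqb_refl; reflexivity. Qed.

Lemma cum_cost_mono (L : list stream) (sigma : schedule) (m n : nat) :
  (m <= n)%nat -> (cum_cost L sigma m <= cum_cost L sigma n)%nat.
Proof. induction 1 as [|n _ IH]; simpl; lia. Qed.

Section PeriodicCost.
Variables (L : list stream) (sigma : schedule) (t0 P : nat).
Hypothesis t0_pos : (1 <= t0)%nat.
Hypothesis P_pos : (1 <= P)%nat.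
Hypothesis cost_periodic_pos : forall k, (1 <= cost L sigma (t0 + k * P))%nat.

Lemma cum_cost_periodic_ge (k : nat) :
  (S k <= cum_cost L sigma (t0 + k * P))%nat.
Proof.
  induction k as [|k IH].
  - pose proof (cost_periodic_pos 0) as H0.
    rewrite Nat.mul_0_l, Nat.add_0_r in *.
    destruct t0 as [|t0']; [lia|]; simpl cum_cost; lia.
  - pose proof (cost_periodic_pos (S k)) as HS.
    assert (E : (t0 + S k * P = S (t0 + k * P + (P - 1)))%nat) by lia.
    pose proof (cum_cost_mono L sigma (t0 + k * P) (t0 + k * P + (P - 1))).
    rewrite E in *; simpl cum_cost; lia.
Qed.

Lemma cum_cost_linear_ge (n : nat) : (n <= P * cum_cost L sigma n + t0)%nat.
Proof.
  destruct (Nat.lt_ge_cases n t0) as [Hlt|Hge]; [lia|].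
  set (k := ((n - t0) / P)%nat).
  pose proof (Nat.div_mod (n - t0) P ltac:(lia)) as Edm; fold k in Edm.
  pose proof (Nat.mod_upper_bound (n - t0) P ltac:(lia)).
  pose proof (cum_cost_periodic_ge k).
  pose proof (cum_cost_mono L sigma (t0 + k * P) n ltac:(nia)).
  nia.
Qed.

End PeriodicCost.

Lemma avg_cost_limit_nonneg (L : list stream) (sigma : schedule) (c : R) :
  has_avg_cost L sigma c -> 0 <= c.
Proof.
  intro Hc; apply (Un_cv_ge_of_ge_sub_div _ _ 0 0 Hc); intros n Hn.
  unfold avg_cost, Rdiv; rewrite Rmult_0_l, Rminus_0_r.
  apply Rmult_le_pos; [apply pos_INR|].
  apply Rlt_le, Rinv_0_lt_compat, lt_0_INR; lia.
Qed.

Lemma avg_cost_limit_ge_of_linear (L : list stream) (sigma : schedule) (c : R) (t0 P : nat) :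
  has_avg_cost L sigma c -> (1 <= P)%nat ->
  (forall n, n <= P * cum_cost L sigma n + t0)%nat -> 1 / INR P <= c.
Proof.
  intros Hc HP Hlin.
  apply (Un_cv_ge_of_ge_sub_div _ _ _ (INR t0 / INR P) Hc); intros n Hn.
  pose proof (le_INR _ _ (Hlin n)) as Hb; rewrite plus_INR, mult_INR in Hb.
  assert (Hn' : 0 < INR n) by (apply lt_0_INR; lia).
  assert (HP' : 0 < INR P) by (apply lt_0_INR; lia).
  unfold avg_cost; set (C := INR (cum_cost L sigma n)) in *.
  apply (Rmult_le_reg_r (INR P * INR n)); [nra|].
  replace ((1 / INR P - INR t0 / INR P / INR n) * (INR P * INR n)) with (INR n - INR t0)
    by (field; lra).
  replace (C / INR n * (INR P * INR n)) with (INR P * C) by (field; lra).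
  lra.
Qed.

Theorem lemma8 (lamD muD lamU muU : nat) (sigma : schedule) (c : R) :
  (2 <= lamD)%nat -> (1 <= muD <= lamD)%nat ->
  (2 <= lamU)%nat -> (1 <= muU <= lamU)%nat ->
  optimal (mkStream D lamD muD :: mkStream U lamU muU :: nil) sigma c ->
  c >= (if Nat.eqb (muU mod Nat.gcd lamD lamU) (muD mod Nat.gcd lamD lamU)
        then 1 / INR (Nat.lcm lamD lamU) else 0).
Proof.
  intros HlD HmD HlU HmU [_ [Hc _]]; apply Rle_ge.
  destruct (Nat.eqb_spec (muU mod Nat.gcd lamD lamU) (muD mod Nat.gcd lamD lamU))
    as [Hres|_]; [|exact (avg_cost_limit_nonneg _ _ _ Hc)].
  destruct (exists_common_residue lamD lamU muD muU) as [t0 [Ht0 [HD HU]]];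
    [lia|lia|congruence|].
  assert (Hlcm : (1 <= Nat.lcm lamD lamU)%nat)
    by (enough (Nat.lcm lamD lamU <> 0%nat) by lia; rewrite Nat.lcm_eq_0; lia).
  apply (avg_cost_limit_ge_of_linear _ _ _ t0 _ Hc Hlcm).
  apply cum_cost_linear_ge; [lia|exact Hlcm|]; intro k.
  destruct (arr_dir_two_streams lamD muD lamU muU (t0 + k * Nat.lcm lamD lamU))
    as [HarrD HarrU].
  apply cost_pos_of_arrivals; [lia | rewrite HarrD | rewrite HarrU];
    rewrite arr_on_offset; [lia | |lia |]; simpl.
  - rewrite mod_add_mul_multiple; [exact HD | apply Nat.divide_lcm_l].
  - rewrite mod_add_mul_multiple; [exact HU | apply Nat.divide_lcm_r].
Qed.
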